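(* Let $A$ be an $n\times n$ real matrix whose eigenvalues are all distinct, and let $p\geq 1$ be an integer. Then the following are equivalent: (i) there exists a real $n\times n$ diagonal matrix $B_d$ with at most $k$ nonzero entries such that the system $\frac{dx(t)}{dt}=Ax(t)+B_d u(t)$ is controllable; (ii) there exists a real $n\times p$ matrix $B_f$ with at most $k$ nonzero entries such that the system $\frac{dx(t)}{dt}=Ax(t)+B_f u(t)$ is controllable.
   Context: Controllability refers to the usual notion for continuous-time linear time-invariant systems $\frac{dx}{dt}=Ax+Bu$ (controllability of the pair $(A,B)$). A vector or matrix is called $k$-sparse if it has at most $k$ nonzero entries; the paper phrases (i) as ''the system $\Sigma_d$ is $k$-sparse controllable'' and (ii) as ''the system $\Sigma_f$ is $k$-sparse controllable''. *)

From HB Require Import structures.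
From mathcomp Require Import all_boot all_order all_algebra.
From mathcomp Require Import complex.
From mathcomp Require Import reals.
Set Implicit Arguments. Unset Strict Implicit. Unset Printing Implicit Defensive.
Import Order.TTheory GRing.Theory Num.Theory.
Local Open Scope ring_scope.

Definition ctrb_mx (R : pzRingType) (n m : nat) (A : 'M[R]_n) (B : 'M[R]_(n, m)) :
  'M[R]_(n, \sum_(i < n) m) :=
  \mxrow_(i < n) (A ^+ i *m B).

Definition controllable (R : fieldType) (n m : nat) (A : 'M[R]_n) (B : 'M[R]_(n, m)) : bool :=
  \rank (ctrb_mx A B) == n.

Definition ksparse (R : nzRingType) (m n k : nat) (B : 'M[R]_(m, n)) : bool :=
  (#|[set ij : 'I_m * 'I_n | B ij.1 ij.2 != 0%R]| <= k)%N.

Definition cplx_mx (R : rcfType) (n : nat) (A : 'M[R]_n) : 'M[complex R]_n :=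
  map_mx (fun x : R => (x%:C)%C) A.

Definition distinct_eigenvalues (R : rcfType) (n : nat) (A : 'M[R]_n) : Prop :=
  exists s : seq (complex R),
    [/\ size s = n, uniq s &
        char_poly (cplx_mx A) = \prod_(z <- s) ('X - z%:P)].

(* Over C, P A = diag(d) P with P invertible and the eigenvalues d pairwise
   distinct.  Then (A, B) controllable forces every row of P B to be nonzero
   (the rows of P are left eigenvectors), and conversely a single column b
   with all entries of P b nonzero is controllable.  From a controllable
   k-sparse diagonal B_d with support S, every row of P meets S, so a real
   column supported on S with entries t^i for a generic t makes P b nowhere
   zero; placed in one column it is a k-sparse B_f.  Conversely, the 0/1
   diagonal matrix selecting the nonzero rows of B_f is at most as sparse as
   B_f and its column space contains that of B_f. *)

From HB Require Import structures.
From mathcomp Require Import all_boot all_order all_algebra.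
From mathcomp Require Import complex reals.
Set Implicit Arguments. Unset Strict Implicit. Unset Printing Implicit Defensive.
Import Order.TTheory GRing.Theory Num.Theory.
Local Open Scope ring_scope.

Lemma controllableP (F : fieldType) n m (A : 'M[F]_n) (B : 'M_(n, m)) :
  controllable A B <->
  (forall u : 'rV_n, (forall i : 'I_n, u *m (A ^+ i *m B) = 0) -> u = 0).
Proof.
have ctrbE u : u *m ctrb_mx A B = \mxrow_(i < n) (u *m (A ^+ i *m B)).
  by rewrite /ctrb_mx mul_mxrow.
split=> [ctrlAB u uAB0 | ctrlAB].
  apply: (row_free_inj ctrlAB); rewrite mul0mx ctrbE.
  by rewrite -(mxrow0 (q_ := fun _ : 'I_n => m)); apply: eq_mxrow.
apply: inj_row_free => u uAB0; apply: ctrlAB => i.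
have := congr1 (fun M => submxrow (q_ := fun _ : 'I_n => m) M i) uAB0.
by rewrite /= ctrbE mxrowK submxrow0.
Qed.

Lemma controllable_mulmx (F : fieldType) n m l (A : 'M[F]_n) (B : 'M_(n, m))
    (C : 'M_(m, l)) :
  controllable A (B *m C) -> controllable A B.
Proof.
move=> /controllableP ctrlABC; apply/controllableP => u uAB0.
by apply: ctrlABC => i; rewrite !mulmxA -(mulmxA u) uAB0 mul0mx.
Qed.

Lemma map_mxX (R S : pzRingType) (f : {rmorphism R -> S}) n (A : 'M[R]_n) i :
  map_mx f (A ^+ i) = map_mx f A ^+ i.
Proof.
elim: i => [|i IHi]; first by rewrite !expr0 map_mx1.
by rewrite !exprS -!mulmxE map_mxM IHi.
Qed.

Lemma map_ctrb_mx (R S : pzRingType) (f : {rmorphism R -> S}) n m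
    (A : 'M[R]_n) (B : 'M_(n, m)) :
  map_mx f (ctrb_mx A B) = ctrb_mx (map_mx f A) (map_mx f B).
Proof.
rewrite /ctrb_mx -[LHS]submxrowK; apply: eq_mxrow => i.
rewrite -map_mxX -map_mxM -(mxrowK (fun i => A ^+ i *m B) i).
by apply/matrixP => a b; rewrite !mxE.
Qed.

Lemma controllable_map (F K : fieldType) (f : {rmorphism F -> K}) n m
    (A : 'M[F]_n) (B : 'M_(n, m)) :
  controllable (map_mx f A) (map_mx f B) = controllable A B.
Proof. by rewrite /controllable -map_ctrb_mx mxrank_map. Qed.

Lemma Vandermonde_unitmx (F : fieldType) n (a : 'rV[F]_n) :
  injective (a 0) -> Vandermonde n a \in unitmx.
Proof.
move=> a_inj; rewrite unitmxE det_Vandermonde unitfE.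
apply/prodf_neq0 => i _; apply/prodf_neq0 => j ltij; rewrite subr_eq0.
by apply/eqP => /a_inj eqji; rewrite eqji ltnn in ltij.
Qed.

Lemma exists_natr_nonroot (F : numDomainType) (q : {poly F}) :
  q != 0 -> exists i : nat, ~~ root q i%:R.
Proof.
move=> q_neq0; pose xs := [seq i%:R : F | i <- iota 0 (size q)].
have [all_roots|/allPn [_ /mapP [i _ ->]]] := boolP (all (root q) xs); last first.
  by exists i.
have xs_uniq : uniq xs.
  by rewrite map_inj_uniq ?iota_uniq // => i j /eqP; rewrite eqr_nat => /eqP.
have := max_poly_roots q_neq0 all_roots xs_uniq.
by rewrite size_map size_iota ltnn.
Qed.

Section Diagonalized.
Variables (F : fieldType) (n : nat) (A P : 'M[F]_n) (d : 'rV[F]_n).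
Hypotheses (P_unit : P \in unitmx) (PA : P *m A = diag_mx d *m P).

Lemma row_diagonalizer_mulX j i : row j P *m A ^+ i = d 0 j ^+ i *: row j P.
Proof.
elim: i => [|i IHi]; first by rewrite expr0 mulmx1 scale1r.
rewrite exprSr -mulmxE mulmxA IHi -scalemxAl -row_mul PA row_mul row_diag_mx.
by rewrite -scalemxAl -rowE scalerA exprSr mulrC.
Qed.

Lemma row_diagonalizer_neq0 j : row j P != 0.
Proof.
apply/eqP => Pj0; have := row_free_inj (etrans (row_free_unit P) P_unit).
move=> /(_ 1 (delta_mx 0 j) 0); rewrite -rowE Pj0 mul0mx => /(_ erefl).
by move=> /matrixP /(_ 0 j) /eqP; rewrite !mxE !eqxx oner_eq0.
Qed.

Lemma controllable_row_diagonalizer_neq0 m (B : 'M_(n, m)) j :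
  controllable A B -> row j P *m B != 0.
Proof.
move=> /controllableP ctrlAB; apply: contraNneq (row_diagonalizer_neq0 j).
move=> PjB0; apply/eqP/ctrlAB => i.
by rewrite mulmxA row_diagonalizer_mulX -scalemxAl PjB0 scaler0.
Qed.

Lemma controllable_diag_support (e : 'rV[F]_n) j :
  controllable A (diag_mx e) -> exists2 i, e 0 i != 0 & P j i != 0.
Proof.
move=> /(controllable_row_diagonalizer_neq0 j); rewrite mul_mx_diag.
case/eqP/rowP/eqfunP/forallPn => i; rewrite !mxE mulf_eq0 negb_or => /andP[].
by exists i.
Qed.

Hypothesis d_inj : injective (d 0).

(* Writing [u = z *m P], the coordinates of [z] weighted by [P *m b] solve a
   homogeneous Vandermonde system in the eigenvalues. *)
Lemma controllable_diagonalized_col (b : 'cV[F]_n) :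
  (forall j, (P *m b) j 0 != 0) -> controllable A b.
Proof.
move=> Pb_neq0; apply/controllableP => u uAb0.
pose z := u *m invmx P; have uzP : u = z *m P by rewrite mulmxKV.
clearbody z.
pose w := \col_j (z 0 j * (P *m b) j 0).
have Vw0 : Vandermonde n d *m w = 0.
  apply/matrixP => i k; have := uAb0 i.
  rewrite uzP -mulmxA mulmx_sum_row => /matrixP /(_ 0 k).
  rewrite !mxE summxE => uAb0_ik; rewrite -[RHS]uAb0_ik; apply: eq_bigr => j _.
  rewrite row_mul mulmxA row_diagonalizer_mulX -scalemxAl -row_mul.
  by rewrite !mxE (ord1 k) mulrCA.
have w0 : w = 0 by rewrite -(mulKmx (Vandermonde_unitmx d_inj) w) Vw0 mulmx0.
rewrite uzP; suff -> : z = 0 by rewrite mul0mx.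
apply/rowP => j; rewrite mxE; have /matrixP /(_ j 0) /eqP := w0.
by rewrite mxE [X in _ == X]mxE mulf_eq0 (negPf (Pb_neq0 j)) orbF => /eqP.
Qed.

End Diagonalized.

(* The entries of [P *m b], for [b] the powers [t ^+ i] on [S], are values at
   [t] of nonzero polynomials; [t] is chosen off the roots of their product. *)
Lemma exists_col_mul_neq0 (K : nzRingType) (F : numDomainType)
    (f : {rmorphism K -> F}) m n (P : 'M[F]_(m, n)) (S : pred 'I_n) :
  (forall j, exists2 i, S i & P j i != 0) ->
  exists2 b : 'cV[K]_n,
    forall i, ~~ S i -> b i 0 = 0 & forall j, (P *m map_mx f b) j 0 != 0.
Proof.
move=> P_support.
pose q j := \sum_(i | S i) P j i *: ('X^i : {poly F}).
have q_neq0 j : q j != 0.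
  have [i Si Pji_neq0] := P_support j; apply: contraNneq Pji_neq0 => qj0.
  have /eqP := congr1 (fun r : {poly F} => r`_i) qj0.
  rewrite coef0 coef_sum (bigD1 i) //= coefZ coefXn eqxx mulr1 big1 ?addr0 //.
  by move=> l /andP[_ /negPf li]; rewrite coefZ coefXn eq_sym val_eqE li mulr0.
have q_prod_neq0 : \prod_j q j != 0 by apply/prodf_neq0 => j _.
have [t] := exists_natr_nonroot q_prod_neq0.
rewrite rootE horner_prod => /prodf_neq0 qt_neq0.
exists (\col_i (if S i then t%:R ^+ i else 0)) => [i /negPf Si|j].
  by rewrite mxE Si.
apply: contra (qt_neq0 j isT) => /eqP <-.
rewrite /q horner_sum big_mkcond !mxE; apply/eqP/eq_bigr => i _.
rewrite !mxE; case: (S i); last by rewrite rmorph0 mulr0.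
by rewrite hornerZ hornerXn rmorphXn rmorph_nat.
Qed.

Lemma ksparse_support_image (R : nzRingType) m n m' n' k
    (f : 'I_m' * 'I_n' -> 'I_m * 'I_n) (B : 'M[R]_(m, n)) (C : 'M[R]_(m', n')) :
  (forall i j, B i j != 0 -> exists2 ij, C ij.1 ij.2 != 0 & f ij = (i, j)) ->
  ksparse k C -> ksparse k B.
Proof.
move=> B_support; apply: leq_trans; apply: leq_trans (leq_imset_card f _).
apply/subset_leq_card/subsetP => -[i j]; rewrite inE => /B_support[ij Cij <-].
by apply: imset_f; rewrite inE.
Qed.

Lemma ksparse_col_mul_delta (R : nzRingType) n p k (e : 'rV[R]_n) (b : 'cV[R]_n)
    (j0 : 'I_p) :
  (forall i, e 0 i = 0 -> b i 0 = 0) -> ksparse k (diag_mx e) ->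
  ksparse k (b *m delta_mx 0 j0).
Proof.
move=> b_support.
apply: (ksparse_support_image (f := fun ij : 'I_n * 'I_n => (ij.1, j0))) => i j.
rewrite mxE big_ord1 mxE; have [<-|] := eqVneq j0 j; last by rewrite mulr0 eqxx.
move=> bi_neq0; exists (i, i); rewrite //= mxE eqxx mulr1n.
by apply: contra bi_neq0 => /eqP /b_support ->; rewrite mul0r.
Qed.

Definition row_support_mx (R : nzRingType) m n (B : 'M[R]_(m, n)) : 'M[R]_m :=
  diag_mx (\row_i [exists j, B i j != 0]%:R).

Lemma row_support_mxK (R : nzRingType) m n (B : 'M[R]_(m, n)) :
  row_support_mx B *m B = B.
Proof.
apply/matrixP => i j; rewrite mul_diag_mx !mxE.
have [_|/existsPn /(_ j)] := boolP [exists j, B i j != 0]; first by rewrite mul1r.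
by rewrite negbK mul0r => /eqP.
Qed.

Lemma ksparse_row_support_mx (R : nzRingType) m n k (B : 'M[R]_(m, n)) :
  ksparse k B -> ksparse k (row_support_mx B).
Proof.
apply: (ksparse_support_image (f := fun ij : 'I_m * 'I_n => (ij.1, ij.1))).
move=> i i'; rewrite !mxE.
have [<-|] := eqVneq i i'; last by rewrite mulr0n eqxx.
rewrite mulr1n; case: existsP => [[j Bij] _|_]; first by exists (i, j).
by rewrite eqxx.
Qed.

(* The roots [s] of the characteristic polynomial are roots of the minimal
   polynomial, which for a diagonalizing [d] has one root per distinct entry of
   [d]; so the [n] entries of [d] are pairwise distinct. *)
Lemma uniq_spectrum_diagonalizer (F : fieldType) n (A : 'M[F]_n) (s : seq F) :
  size s = n -> uniq s -> char_poly A = \prod_(z <- s) ('X - z%:P) ->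
  exists P (d : 'rV[F]_n),
    [/\ P \in unitmx, P *m A = diag_mx d *m P & injective (d 0)].
Proof.
case: n A => [|n] A size_s s_uniq charA.
  by exists 1%:M, 0; split; [exact: unitmx1 | rewrite !thinmx0 | case].
have minA_dvd : mxminpoly A %| \prod_(z <- s) ('X - z%:P).
  by rewrite -charA mxminpoly_dvd_char.
have [P P_unit /similar_diagPex[d simPA]] := (diagonalizableP A).2
  (ex_intro2 _ _ s s_uniq minA_dvd).
exists P, d; split=> //; first exact/(similarP P_unit).
have s_roots : all (root (mxminpoly A)) s.
  by apply/allP => z zs; rewrite root_mxminpoly charA root_prod_XsubC zs.
have := max_poly_roots (monic_neq0 (mxminpoly_monic A)) s_roots s_uniq.
rewrite (similar_mxminpoly P_unit simPA) mxminpoly_diag size_prod_XsubC.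
rewrite size_s ltnS => d_undup.
have d_uniq : uniq [seq d 0 i | i <- enum 'I_n.+1].
  by rewrite -[uniq _]negbK -ltn_size_undup size_map size_enum_ord -leqNgt.
by apply/injectiveP.
Qed.

Theorem corollary1 (R : realType) (n p k : nat) (A : 'M[R]_n) :
  distinct_eigenvalues A -> (1 <= p)%N ->
  ((exists Bd : 'M[R]_n, [/\ is_diag_mx Bd, ksparse k Bd & controllable A Bd]) <->
   (exists Bf : 'M[R]_(n, p), ksparse k Bf /\ controllable A Bf)).
Proof.
move=> [s [size_s s_uniq charA]] p_gt0.
have [P [d [P_unit PA d_inj]]] := uniq_spectrum_diagonalizer size_s s_uniq charA.
pose f := real_complex R; pose j0 : 'I_p := Ordinal p_gt0.
split=> [[_ [/diag_mxP[e ->] e_sparse ctrl_e]] | [Bf [Bf_sparse ctrl_Bf]]].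
  have e_support j : exists2 i, e 0 i != 0 & P j i != 0.
    have ctrl_ef : controllable (cplx_mx A) (diag_mx (map_mx f e)).
      by rewrite -map_diag_mx controllable_map.
    have [i ei_neq0 Pji_neq0] := controllable_diag_support P_unit PA j ctrl_ef.
    by exists i; rewrite // mxE fmorph_eq0 in ei_neq0.
  have [b b_support Pb_neq0] := exists_col_mul_neq0 f e_support.
  exists (b *m delta_mx 0 j0); split.
    by apply: ksparse_col_mul_delta e_sparse => i ei0; rewrite b_support // ei0 eqxx.
  apply: (controllable_mulmx (C := delta_mx j0 (0 : 'I_1))).
  rewrite -mulmxA mul_delta_mx.
  have -> : delta_mx 0 0 = 1%:M :> 'M[R]_1 by apply/rowP => i; rewrite !ord1 !mxE.
  rewrite mulmx1 -(controllable_map f).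
  exact: controllable_diagonalized_col P_unit PA d_inj _ Pb_neq0.
exists (row_support_mx Bf); split; first exact: diag_mx_is_diag.
  exact: ksparse_row_support_mx.
by apply: (controllable_mulmx (C := Bf)); rewrite row_support_mxK.
Qed.
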